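(* For every nonnegative integer $n$, $$\sum_{k=0}^{\infty}(-1)^k(4k+1)\,\frac{(-n)_k\,(-4n-\tfrac32)_k\,(\tfrac12)_k}{k!\,(n+\tfrac32)_k\,(4n+3)_k}=\left(\frac{2^8}{5^5}\right)^n\frac{(\tfrac54)_n(\tfrac34)_n(\tfrac32)_n^2}{(\tfrac65)_n(\tfrac75)_n(\tfrac35)_n(\tfrac45)_n}.$$ (The sum is finite, since $(-n)_k=0$ for $k>n$.)
   Context: $(a)_j=\Gamma(a+j)/\Gamma(a)=a(a+1)\cdots(a+j-1)$ denotes the rising factorial (Pochhammer symbol), with $(a)_0=1$. *)

From HB Require Import structures.
From mathcomp Require Import all_boot all_order all_algebra.
Set Implicit Arguments. Unset Strict Implicit. Unset Printing Implicit Defensive.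
Import Order.TTheory GRing.Theory Num.Theory.
Local Open Scope ring_scope.

Definition poch (a : rat) (j : nat) : rat := \prod_(i < j) (a + i%:R).

From HB Require Import structures.
From mathcomp Require Import all_boot all_order all_algebra.
From mathcomp Require Import ring lra.
Import Order.TTheory GRing.Theory Num.Theory.
Local Open Scope ring_scope.

Set Warnings "-abstract-large-number".

(* Proof by the Wilf-Zeilberger method.

   Write F(n,k) for the k-th term of the series and S(n) for its sum; since
   (-n)_k = 0 for k > n, the partial sums stabilise from k = n on, so it is
   enough to show S(n) = \sum_(k <= n) F(n,k) equals the right-hand side
   C(n).  We have C(0) = S(0) = 1 and C(n+1) = rho(n) C(n) for an explicit
   rational function rho, so it suffices to prove S(n+1) = rho(n) S(n).

   For this we exhibit a rational certificate R(n,k) such that, with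
   G(n,k) = R(n,k) F(n+1,k), the WZ equation
       F(n+1,k) - rho(n) F(n,k) = G(n,k+1) - G(n,k)
   holds for all n, k.  Summing it over k <= n+1 telescopes to
   G(n,n+2) - G(n,0) = 0, since R(n,0) = 0 and F(n+1,n+2) = 0.

   The WZ equation is reduced to a polynomial identity (checked by [ring])
   through the two term ratios F(m,k+1)/F(m,k) and F(n,k)/F(n+1,k).  The
   ratios are taken relative to F(n+1,k) because F(n,k) itself vanishes for
   k > n, whereas F(n,k)/F(n+1,k) has no poles at natural numbers n, k. *)

Lemma poch0 (a : rat) : poch a 0 = 1.
Proof. by rewrite /poch big_ord0. Qed.

Lemma pochS (a : rat) (j : nat) : poch a j.+1 = poch a j * (a + j%:R).
Proof. by rewrite /poch big_ord_recr. Qed.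

Lemma pochSl (a : rat) (j : nat) : poch a j.+1 = a * poch (a + 1) j.
Proof.
rewrite /poch big_ord_recl /= addr0; congr (_ * _).
by apply: eq_bigr => i _; rewrite /bump /= natrD addrA.
Qed.

Lemma poch_gt0 (a : rat) (j : nat) : 0 < a -> 0 < poch a j.
Proof.
move=> a_gt0; apply: prodr_gt0 => i _.
by apply: ltr_wpDr; [exact: ler0n | exact: a_gt0].
Qed.

(* The factor a + n of (a)_k vanishes when a = -n and k > n: this is what
   makes the series terminate. *)
Lemma poch_neg_nat (n k : nat) : (n < k)%N -> poch (- n%:R) k = 0.
Proof. by move=> lt_nk; rewrite /poch (bigD1 (Ordinal lt_nk)) //= addNr mul0r. Qed.

Lemma poch_succ (a : rat) (j : nat) : a != 0 ->
  poch (a + 1) j = poch a j * (a + j%:R) / a.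
Proof. by move=> a_neq0; apply: (canRL (mulfK a_neq0)); rewrite -pochS pochSl; ring. Qed.

Lemma poch_shift4 (a : rat) (j : nat) :
  poch a j * ((a + j%:R) * (a + 1 + j%:R) * (a + 2 + j%:R) * (a + 3 + j%:R))
  = a * (a + 1) * (a + 2) * (a + 3) * poch (a + 4) j.
Proof.
transitivity (poch a j.+4); first by rewrite !pochS; ring.
have -> : a + 4 = a + 1 + 1 + 1 + 1 by ring.
by rewrite !pochSl; ring.
Qed.

Lemma poch_add4 (a : rat) (j : nat) : a * (a + 1) * (a + 2) * (a + 3) != 0 ->
  poch (a + 4) j = poch a j
    * ((a + j%:R) * (a + 1 + j%:R) * (a + 2 + j%:R) * (a + 3 + j%:R))
    / (a * (a + 1) * (a + 2) * (a + 3)).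
Proof. by move=> nz; apply: (canRL (mulfK nz)); rewrite poch_shift4; ring. Qed.

(* Side conditions of [field]: every denominator met below is a product of
   Pochhammer symbols with positive base, factorials, and affine forms of
   constant sign in casts of natural numbers; [lra] decides the sign, using
   hypotheses in the context stating that those casts are nonnegative. *)
Ltac positive :=
  lazymatch goal with
  | |- is_true (0 < poch _ _) => apply: poch_gt0; lra
  | |- is_true (0 < (_ `!)%:R) => by rewrite ltr0n fact_gt0
  | |- _ => lra
  end.

Ltac nonzero :=
  lazymatch goal with
  | |- is_true (_ && _) => apply/andP; split; nonzero
  | |- is_true (_ * _ != 0) => apply: mulf_neq0; nonzero
  | |- is_true (_ ^+ _ != 0) => apply: expf_neq0; nonzero
  | |- _ => first [ apply: lt0r_neq0; positive | apply: ltr0_neq0; lra ]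
  end.

Definition summand (n k : nat) : rat :=
  (-1) ^+ k * (4 * k%:R + 1) *
  (poch (- n%:R) k * poch (- 4 * n%:R - 3 / 2) k * poch (1 / 2) k)
  / ((k`!)%:R * poch (n%:R + 3 / 2) k * poch (4 * n%:R + 3) k).

Definition closed_form (n : nat) : rat :=
  ((2 ^+ 8 / 5 ^+ 5) ^+ n : rat) *
  (poch (5 / 4) n * poch (3 / 4) n * poch (3 / 2) n ^+ 2)
  / (poch (6 / 5) n * poch (7 / 5) n * poch (3 / 5) n * poch (4 / 5) n).

Definition rho (n : nat) : rat :=
  4 * (4 * n%:R + 5) * (4 * n%:R + 3) * (2 * n%:R + 3) ^+ 2
  / (5 * ((5 * n%:R + 3) * (5 * n%:R + 4) * (5 * n%:R + 6) * (5 * n%:R + 7))).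

Lemma closed_form_succ (n : nat) : closed_form n.+1 = rho n * closed_form n.
Proof.
have n_ge0 := ler0n rat n.
by rewrite /closed_form /rho !pochS exprS; field; nonzero.
Qed.

Definition ratio_k (m k : nat) : rat :=
  - ((4 * k%:R + 5) * (k%:R - m%:R) * (2 * k%:R - 8 * m%:R - 3) * (2 * k%:R + 1))
  / (2 * (4 * k%:R + 1) * (k%:R + 1) * (2 * m%:R + 2 * k%:R + 3) * (4 * m%:R + k%:R + 3)).

Lemma summand_succ_k (m k : nat) : summand m k.+1 = ratio_k m k * summand m k.
Proof.
have m_ge0 := ler0n rat m; have k_ge0 := ler0n rat k.
rewrite /summand /ratio_k !pochS factS natrM exprS -[(k.+1)%:R]natr1.
by field; nonzero.
Qed.

Definition ratio_n (n k : nat) : rat :=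
  (n%:R + 1 - k%:R) * (2 * n%:R + 2 * k%:R + 3)
  * ((2 * k%:R - 8 * n%:R - 5) * (2 * k%:R - 8 * n%:R - 7)
     * (2 * k%:R - 8 * n%:R - 9) * (2 * k%:R - 8 * n%:R - 11))
  * ((4 * n%:R + k%:R + 3) * (4 * n%:R + k%:R + 4) * (4 * n%:R + k%:R + 5) * (4 * n%:R + k%:R + 6))
  / ((n%:R + 1) * (2 * n%:R + 3)
     * ((8 * n%:R + 5) * (8 * n%:R + 7) * (8 * n%:R + 9) * (8 * n%:R + 11))
     * ((4 * n%:R + 3) * (4 * n%:R + 4) * (4 * n%:R + 5) * (4 * n%:R + 6))).

Lemma summand_pred_n (n k : nat) : summand n k = ratio_n n k * summand n.+1 k.
Proof.
have n_ge0 := ler0n rat n; have k_ge0 := ler0n rat k.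
rewrite /summand -[(n.+1)%:R]natr1.
(* Express the bases for n as shifts of the bases for n + 1, or conversely,
   always shifting away from a base that is known to be nonzero. *)
have -> : - n%:R = - (n%:R + 1) + 1 :> rat by ring.
have -> : - 4 * n%:R - 3 / 2 = (- 4 * (n%:R + 1) - 3 / 2) + 4 :> rat by ring.
have -> : (n%:R + 1) + 3 / 2 = (n%:R + 3 / 2) + 1 :> rat by ring.
have -> : 4 * (n%:R + 1) + 3 = (4 * n%:R + 3) + 4 :> rat by ring.
rewrite !poch_succ ?poch_add4 /ratio_n; first by field; nonzero.
all: nonzero.
Qed.

(* The polynomial P is locked: it is
   only ever unfolded for the [ring] computation of [wz_residual_eq0], and
   conversion must never try to evaluate its large coefficients. *)
HB.lock Definition wz_poly (x y : rat) : rat :=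
    (- 183691800%:R + x * (- 2318168430%:R + x * (- 13284960012%:R + x * (- 45721493376%:R +
      x * (- 105261173468%:R + x * (- 170803501890%:R + x * (- 200335898648%:R + x *
      (- 171159318312%:R + x * (- 105733334208%:R + x * (- 46065432960%:R + x *
      (- 13437844480%:R + x * (- 2357010432%:R + x * (- 188022784%:R)))))))))))))
  + y * (- 16059060%:R + x * (- 162725868%:R + x * (- 736588656%:R + x * (- 1961062908%:R +
      x * (- 3400279890%:R + x * (- 4011739080%:R + x * (- 3261513256%:R + x *
      (- 1804141440%:R + x * (- 649849216%:R + x * (- 137637888%:R + x *
      (- 13017088%:R)))))))))))
  + y ^+ 2 * (31334715%:R + x * (319436802%:R + x * (1453065324%:R + x * (3883898290%:R + x
      * (6755410028%:R + x * (7989565688%:R + x * (6507214864%:R + x * (3604100736%:R + x *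
      (1299218176%:R + x * (275275776%:R + x * (26034176%:R)))))))))))
  + y ^+ 3 * (3116340%:R + x * (23965272%:R + x * (80234250%:R + x * (152654032%:R + x *
      (180427752%:R + x * (135589344%:R + x * (63237760%:R + x * (16728576%:R + x *
      (1921024%:R)))))))))
  + y ^+ 4 * (- 3030075%:R + x * (- 23493420%:R + x * (- 79166328%:R + x * (- 151373992%:R +
      x * (- 179571536%:R + x * (- 135286624%:R + x * (- 63193600%:R + x * (- 16728576%:R +
      x * (- 1921024%:R)))))))))
  + y ^+ 5 * (- 206280%:R + x * (- 1129824%:R + x * (- 2559720%:R + x * (- 3070304%:R + x *
      (- 2054560%:R + x * (- 726528%:R + x * (- 105984%:R)))))))
  + y ^+ 6 * (135000%:R + x * (744480%:R + x * (1695504%:R + x * (2040896%:R + x *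
      (1368512%:R + x * (484352%:R + x * (70656%:R)))))))
  + y ^+ 7 * (4320%:R + x * (14976%:R + x * (18816%:R + x * (10240%:R + x * (2048%:R)))))
  + y ^+ 8 * (- 2160%:R + x * (- 7488%:R + x * (- 9408%:R + x * (- 5120%:R + x *
      (- 1024%:R))))).

Definition wz_den (x : rat) : rat :=
  (x + 1) ^+ 2 * (2 * x + 3) ^+ 2 * (4 * x + 3) * (4 * x + 5)
  * ((8 * x + 5) * (8 * x + 7) * (8 * x + 9) * (8 * x + 11))
  * ((5 * x + 3) * (5 * x + 4) * (5 * x + 6) * (5 * x + 7)).

Definition wz_cert (n k : nat) : rat :=
  k%:R * (2 * n%:R + 2 * k%:R + 3) * (4 * n%:R + k%:R + 6) * wz_poly n%:R k%:R
  / (5 * (4 * k%:R + 1) * wz_den n%:R).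

Definition wz_mate (n k : nat) : rat := wz_cert n k * summand n.+1 k.

(* The WZ equation divided by F(n+1,k) and multiplied by the common
   denominator 10 (4k+1) D(n), at x = n and y = k: it holds as an identity
   of polynomials. *)
Definition wz_residual (x y : rat) : rat :=
  10 * (4 * y + 1) * wz_den x
  - (4 * y + 1) * (4 * x + 5) * (4 * x + 3) * (2 * x + 3) ^+ 2 * (x + 1 - y) * (2 * x + 2 * y + 3)
    * ((2 * y - 8 * x - 5) * (2 * y - 8 * x - 7) * (2 * y - 8 * x - 9) * (2 * y - 8 * x - 11))
    * ((4 * x + y + 3) * (4 * x + y + 4) * (4 * x + y + 5) * (4 * x + y + 6))
  + (y - x - 1) * (2 * y - 8 * x - 11) * (2 * y + 1) * wz_poly x (y + 1)
  + 2 * y * (2 * x + 2 * y + 3) * (4 * x + y + 6) * wz_poly x y.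

Lemma wz_residual_eq0 (x y : rat) : wz_residual x y = 0.
Proof. by rewrite /wz_residual /wz_den wz_poly.unlock; ring. Qed.

Lemma wz_equation (n k : nat) :
  summand n.+1 k - rho n * summand n k = wz_mate n k.+1 - wz_mate n k.
Proof.
have n_ge0 := ler0n rat n; have k_ge0 := ler0n rat k.
apply/eqP; rewrite -subr_eq0; apply/eqP.
rewrite /wz_mate summand_succ_k (summand_pred_n n k).
transitivity (summand n.+1 k * wz_residual n%:R k%:R / (10 * (4 * k%:R + 1) * wz_den n%:R)).
  rewrite /wz_residual /rho /ratio_n /ratio_k /wz_cert /wz_den.
  by rewrite -[(n.+1)%:R]natr1 -[(k.+1)%:R]natr1; field; nonzero.
by rewrite wz_residual_eq0 mulr0 mul0r.
Qed.

Lemma summand_eq0 (n k : nat) : (n < k)%N -> summand n k = 0.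
Proof. by move=> lt_nk; rewrite /summand poch_neg_nat // !(mul0r, mulr0). Qed.

Lemma wz_mate0 (n : nat) : wz_mate n 0 = 0.
Proof. by rewrite /wz_mate /wz_cert !mul0r. Qed.

Lemma wz_mate_top (n : nat) : wz_mate n n.+2 = 0.
Proof. by rewrite /wz_mate summand_eq0 ?mulr0. Qed.

Lemma sum_summand_trunc (n N : nat) : (n < N)%N ->
  \sum_(k < N) summand n k = \sum_(k < n.+1) summand n k.
Proof.
move=> lt_nN; rewrite -!(big_mkord xpredT) (big_cat_nat _ (n := n.+1)) //=.
rewrite [X in _ + X]big1_seq ?addr0 // => k /andP[_].
by rewrite mem_index_iota => /andP[lt_nk _]; exact: summand_eq0.
Qed.

Lemma sum_summand_succ (n : nat) :
  \sum_(k < n.+2) summand n.+1 k = rho n * \sum_(k < n.+1) summand n k.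
Proof.
apply/eqP; rewrite -subr_eq0 -(@sum_summand_trunc n n.+2) // mulr_sumr -sumrB.
rewrite (eq_bigr (fun k : 'I_n.+2 => wz_mate n k.+1 - wz_mate n k)) => [|k _];
  last exact: wz_equation.
rewrite -(big_mkord xpredT (fun k => wz_mate n k.+1 - wz_mate n k)) telescope_sumr //.
by rewrite wz_mate_top wz_mate0 subrr.
Qed.

Lemma sum_summand_closed (n : nat) : \sum_(k < n.+1) summand n k = closed_form n.
Proof.
elim: n => [|n IHn]; last by rewrite sum_summand_succ IHn closed_form_succ.
by rewrite big_ord1 /summand /closed_form /= !poch0 fact0 expr0; field.
Qed.

Theorem theorem6 (n N : nat) (hN : (n < N)%N) :
  \sum_(k < N)
     (-1) ^+ k * (4 * k%:R + 1) *
     (poch (- n%:R) k * poch (- 4 * n%:R - 3 / 2) k * poch (1 / 2) k)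
     / ((k`!)%:R * poch (n%:R + 3 / 2) k * poch (4 * n%:R + 3) k)
  = ((2 ^+ 8 / 5 ^+ 5) ^+ n : rat) *
    (poch (5 / 4) n * poch (3 / 4) n * poch (3 / 2) n ^+ 2)
    / (poch (6 / 5) n * poch (7 / 5) n * poch (3 / 5) n * poch (4 / 5) n).
Proof.
rewrite -[RHS]/(closed_form n) -sum_summand_closed.
exact: sum_summand_trunc.
Qed.
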